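(* Let $E$ be a real or complex Banach space, let $T$ be a strongly continuous one-parameter semigroup on $E$, let $\mathcal U$ be a countably incomplete ultrafilter on an index set $I$, and let ${}^*$ be the nonstandard universe given by the bounded ultrapower with respect to $\mathcal U$. Let $\Phi:\ell^\infty_I(E)/c_{\mathcal U}\to\widehat E$ be the map $\Phi(\langle f_i\rangle+c_{\mathcal U})=\widehat{f}$, where $f\in{}^*E$ is the $\mathcal U$-equivalence class of $\langle f_i\rangle$, and let $\iota: m^T/(c_{\mathcal U}\cap m^T)\to\ell^\infty_I(E)/c_{\mathcal U}$ be $\iota(\langle f_i\rangle+c_{\mathcal U}\cap m^T)=\langle f_i\rangle+c_{\mathcal U}$. Then $\widehat E$ is isomorphic to $\ell^\infty_I(E)/c_{\mathcal U}$ (via $\Phi$), and $\widehat{E}_T$ is isomorphic to $m^T/(c_{\mathcal U}\cap m^T)$; more precisely $\Phi(\iota(m^T/(c_{\mathcal U}\cap m^T)))=\widehat{E}_T$.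
   Context: A semigroup on $E$ is a map $T:[0,\infty)\to\mathcal L(E)$ (bounded linear operators) with $T(0)=\mathrm{Id}$ and $T(s+t)=T(s)T(t)$; it is strongly continuous if $\lim_{t\to0}\|T(t)f-f\|=0$ for every $f\in E$. $\ell^\infty_I(E)$ is the space of bounded $E$-valued families $\langle f_i\rangle_{i\in I}$ with the sup-norm. $c_{\mathcal U}$ is the set of $\langle f_i\rangle\in\ell^\infty_I(E)$ such that for every $\varepsilon>0$ there is $J\in\mathcal U$ with $\|f_i\|<\varepsilon$ for all $i\in J$; $\ell^\infty_I(E)/c_{\mathcal U}$ carries the quotient norm. $\tilde T(t)\langle f_i\rangle:=\langle T(t)f_i\rangle$ is a semigroup on $\ell^\infty_I(E)$, and $m^T:=\{x\in\ell^\infty_I(E):\lim_{t\to0}\|\tilde T(t)x-x\|=0\}$. Nonstandard setting: the bounded ultrapower is the nonstandard universe (superstructure embedding ${}^*$ satisfying transfer for bounded formulas) in which ${}^*E$ consists of $\mathcal U$-equivalence classes of $I$-sequences in $E$, and ${}^*$ acts on $E$ as the diagonal embedding. A nonstandard real $r$ is finite if $|r|<n$ for some standard $n\in\mathbb N$, infinitesimal if $|r|<1/n$ for all standard $n\ge1$; $f\approx g$ means $\|f-g\|$ is infinitesimal. $\mathrm{fin}({}^*E)$ is the set of $f\in{}^*E$ with $\|f\|$ finite, $E_0$ the set of $f$ with $\|f\|$ infinitesimal, $\widehat E=\mathrm{fin}({}^*E)/E_0$ with class map $f\mapsto\widehat f$ and norm $\|\widehat f\|=\mathrm{st}(\|f\|)$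 (standard part). $E_T$ is the set of $f\in\mathrm{fin}({}^*E)$ such that for every standard $\varepsilon>0$ there is a standard $\delta>0$ with $\|{}^*T(t)f-f\|<\varepsilon$ for all positive nonstandard $t<\delta$ (equivalently, $\|{}^*T(h)f-f\|$ is infinitesimal for every positive infinitesimal $h$); $\widehat{E}_T=E_T/E_0\subseteq\widehat E$. *)

From HB Require Import structures.
From mathcomp Require Import all_boot all_order all_algebra.
From mathcomp Require Import all_classical all_reals all_analysis.
Import Order.TTheory GRing.Theory Num.Theory.
Import numFieldNormedType.Exports.
Set Implicit Arguments. Unset Strict Implicit. Unset Printing Implicit Defensive.
Local Open Scope classical_set_scope.
Local Open Scope ring_scope.

Section defs.
Context {R : realType} {E : normedModType R} {I : Type}.

Definition ultrafilter_on (U : set (set I)) : Prop :=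
  [/\ U setT, ~ U set0,
      (forall A B, U A -> U B -> U (A `&` B)),
      (forall A B, A `<=` B -> U A -> U B)
    & (forall A, U A \/ U (~` A))].

Definition countably_incomplete (U : set (set I)) : Prop :=
  exists J : nat -> set I, (forall n, U (J n)) /\ ~ U [set i | forall n, J n i].

Definition bounded_linear (A : E -> E) : Prop :=
  (forall (a : R) (u v : E), A (a *: u + v) = a *: A u + A v) /\
  exists M : R, forall u, `|A u| <= M * `|u|.

Definition semigroup (T : R -> E -> E) : Prop :=
  [/\ (forall t, 0 <= t -> bounded_linear (T t)),
      T 0 = id
    & (forall s t, 0 <= s -> 0 <= t -> T (s + t) = T s \o T t)].

Definition strongly_continuous (T : R -> E -> E) : Prop :=
  forall (f : E) (e : R), 0 < e ->
    exists d : R, 0 < d /\ forall t, 0 <= t < d -> `|T t f - f| < e.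

Definition bounded_family (x : I -> E) : Prop :=
  exists M : R, forall i, `|x i| <= M.

Definition linf_norm (x : I -> E) : R := sup (range (fun i => `|x i|)).

Definition cU (U : set (set I)) (x : I -> E) : Prop :=
  bounded_family x /\
  forall e : R, 0 < e -> exists J, U J /\ forall i, J i -> `|x i| < e.

(* m^T : elements of l^oo on which tilde T is strongly continuous *)
Definition mT (T : R -> E -> E) (x : I -> E) : Prop :=
  bounded_family x /\
  forall e : R, 0 < e -> exists d : R, 0 < d /\
    forall t, 0 < t < d -> linf_norm (fun i => T t (x i) - x i) < e.

Definition quot_norm (S : set (I -> E)) (x : I -> E) : R :=
  inf [set linf_norm (fun i => x i - c i) | c in S].

(* An element of *E (resp. *R) is represented by a family I -> E (resp.
   I -> R); two families represent the same element iff they agree on a set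
   of U.  All predicates below are invariant under this equivalence; by Los,
   relations in *R between classes hold iff they hold on a U-set. *)
Definition ns_finite (U : set (set I)) (r : I -> R) : Prop :=
  exists n : nat, U [set i | `|r i| < n%:R].

Definition ns_infinitesimal (U : set (set I)) (r : I -> R) : Prop :=
  forall n : nat, U [set i | `|r i| < n.+1%:R^-1].

Definition ns_fin (U : set (set I)) (f : I -> E) : Prop :=
  ns_finite U (fun i => `|f i|).

(* f ~ g, i.e. equality of the classes in hat E *)
Definition ns_approx (U : set (set I)) (f g : I -> E) : Prop :=
  ns_infinitesimal U (fun i => `|f i - g i|).

Definition is_st (U : set (set I)) (r : I -> R) (s : R) : Prop :=
  ns_infinitesimal U (fun i => r i - s).

Definition E_T (U : set (set I)) (T : R -> E -> E) (f : I -> E) : Prop :=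
  ns_fin U f /\
  forall e : R, 0 < e -> exists d : R, 0 < d /\
    forall t : I -> R, U [set i | 0 < t i < d] ->
      U [set i | `|T (t i) (f i) - f i| < e].

(* Phi on representatives: the family <f_i> is sent to its class in *E
   (then to hat E); on representatives this is the identity. *)
Definition Phi (x : I -> E) : I -> E := x.

End defs.

(* The map Phi is the identity on representatives, c_U consists exactly of the
   U-infinitesimal families, and the quotient norm of x (modulo c_U, or modulo
   c_U cap m^T) is approached by families vanishing on a U-large set, which gives
   the isometry statements.  Families in m^T are S-continuous, so they represent
   elements of hat E_T.

   Conversely let f be in E_T.  For every k the tolerance 1/(k+1) holds up to a
   standard time d_k on a U-large set B_k; countable incompleteness yields a depth
   function with depth i -> oo along U and i in B_k for all k < depth i.  Replace
   f_i by its average y_i = h_i^-1 \int_0^h_i T s f_i ds over the window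
   h_i = min (1, d_0, ..., d_(depth i - 1)); y_i is built as a limit of dyadic
   Riemann sums, using the bound on T over [0, 2] given by Banach-Steinhaus.
   Then y_i is 1/(depth i)-close to f_i, at the scales d_k with k < depth i the
   modulus of y_i is controlled by that of f_i, and below the window y_i is
   Lipschitz with constant of order |f_i| / h_i.  As h_i only depends on
   depth i, these bounds are uniform in i, so (y_i) lies in m^T. *)

From HB Require Import structures.
From mathcomp Require Import all_boot all_order all_algebra.
From mathcomp Require Import all_classical all_reals all_analysis.
From mathcomp Require Import ring lra.
Import Order.TTheory GRing.Theory Num.Theory.
Import numFieldNormedType.Exports.
Local Open Scope classical_set_scope.
Local Open Scope ring_scope.

Section archimedean.
Context {R : realType}.

Lemma exists_nat_gt (r : R) : exists n : nat, r < n%:R.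
Proof.
exists (Num.Def.archi_bound `|r|).
exact: le_lt_trans (ler_norm r) (archi_boundP (normr_ge0 r)).
Qed.

Lemma exists_natSinv_lt {e : R} : 0 < e -> exists n : nat, n.+1%:R^-1 < e.
Proof.
move=> e0; have [N _ hN] := near_infty_natSinv_lt (PosNum e0).
by exists N; apply: hN => /=.
Qed.

End archimedean.

Section ultrafilter.
Context {I : Type} {U : set (set I)} (HU : ultrafilter_on U).

Lemma ultraT : U setT. Proof. by case: HU. Qed.

Lemma ultraI {A B} : U A -> U B -> U (A `&` B).
Proof. by case: HU => _ _ h _ _; apply: h. Qed.

Lemma ultraS {A B} : A `<=` B -> U A -> U B.
Proof. by case: HU => _ _ _ h _; apply: h. Qed.

Lemma ultra_all {A : set I} : (forall i, A i) -> U A.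
Proof. by move=> h; apply: ultraS ultraT. Qed.

Lemma ultraC {A} : ~ U A -> U (~` A).
Proof. by case: HU => _ _ _ _ h nA; case: (h A). Qed.

Lemma ultra_nonempty {A} : U A -> exists i, A i.
Proof.
case: HU => _ U0 _ _ _ UA; apply: contrapT => nA; apply: U0.
by rewrite (_ : set0 = A) //; apply/seteqP; split => // i Ai; apply: nA; exists i.
Qed.

Lemma ultra_inhabited : inhabited I.
Proof. by have [i _] := ultra_nonempty ultraT; exists. Qed.

End ultrafilter.

Section linf.
Context {R : realType} {E : normedModType R} {I : Type}.
Implicit Types (x y z : I -> E).

Lemma norm_le_linf z i : bounded_family z -> `|z i| <= linf_norm z.
Proof.
move=> [M hM]; apply: ub_le_sup; last by exists i.
by exists M => _ [j _ <-].
Qed.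

Lemma linf_norm_le z (B : R) : inhabited I -> (forall i, `|z i| <= B) ->
  linf_norm z <= B.
Proof.
move=> [i] h; apply: ge_sup; first by exists `|z i|, i.
by move=> _ [j _ <-].
Qed.

Lemma linf_norm_ge0 {z} : inhabited I -> bounded_family z -> 0 <= linf_norm z.
Proof. by move=> [i] bz; exact: le_trans (normr_ge0 (z i)) (norm_le_linf z i bz). Qed.

Lemma bounded_familyB {x y} : bounded_family x -> bounded_family y ->
  bounded_family (fun i => x i - y i).
Proof.
move=> [M hM] [N hN]; exists (M + N) => i.
exact: le_trans (ler_normB _ _) (lerD (hM i) (hN i)).
Qed.

End linf.

Section bounded_linear.
Context {R : realType} {E : normedModType R} {A : E -> E} (BL : bounded_linear A).

Lemma bounded_linear0 : A 0 = 0.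
Proof.
case: BL => _ [M hM]; apply/normr0_eq0/eqP; rewrite eq_le normr_ge0 andbT.
by have := hM 0; rewrite normr0 mulr0.
Qed.

Lemma bounded_linearZ a u : A (a *: u) = a *: A u.
Proof. by rewrite -[a *: u]addr0 BL.1 bounded_linear0 addr0. Qed.

Lemma bounded_linearD u v : A (u + v) = A u + A v.
Proof. by rewrite -[u in LHS]scale1r BL.1 scale1r. Qed.

Lemma bounded_linearB u v : A (u - v) = A u - A v.
Proof. by rewrite bounded_linearD -scaleN1r bounded_linearZ scaleN1r. Qed.

Lemma bounded_linear_sum n (F : nat -> E) :
  A (\sum_(j < n) F j) = \sum_(j < n) A (F j).
Proof.
elim: n => [|n IH]; first by rewrite !big_ord0 bounded_linear0.
by rewrite !big_ord_recr /= bounded_linearD IH.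
Qed.

Lemma bounded_linear_unit_ball (C : R) :
  (forall v, `|v| <= 1 -> `|A v| <= C) -> forall v, `|A v| <= C * `|v|.
Proof.
move=> hC v; have [->|v0] := eqVneq v 0.
  by rewrite bounded_linear0 !normr0 mulr0.
have nv0 : 0 < `|v| by rewrite normr_gt0.
rewrite -[v in A v](scalerKV (lt0r_neq0 nv0)) bounded_linearZ normrZ normr_id.
rewrite mulrC ler_wpM2r ?normr_ge0 //.
by rewrite hC // normrZ normrV ?unitfE ?lt0r_neq0 // normr_id mulVf ?lt0r_neq0.
Qed.

Lemma bounded_family_orbit_step {I : Type} {x : I -> E} : bounded_family x ->
  bounded_family (fun i => A (x i) - x i).
Proof.
case: BL => _ [M hM] [N hN]; apply: bounded_familyB; last by exists N.
exists (`|M| * N) => i; apply: le_trans (hM _) _.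
apply: le_trans (ler_wpM2r (normr_ge0 _) (ler_norm M)) _.
by apply: ler_wpM2l; rewrite ?normr_ge0.
Qed.

End bounded_linear.

(** * A uniform bound for strongly continuous semigroups *)

Section semigroup.
Context {R : realType} {E : normedModType R} {T : R -> E -> E} (sg : semigroup T).

Lemma semigroup_linear {t} : 0 <= t -> bounded_linear (T t).
Proof. by case: sg => h _ _; exact: h. Qed.

Lemma semigroup0 v : T 0 v = v.
Proof. by case: sg => _ -> _. Qed.

Lemma semigroupD s t v : 0 <= s -> 0 <= t -> T (s + t) v = T s (T t v).
Proof. by case: sg => _ _ h s0 t0; rewrite h. Qed.

Lemma semigroupC s t v : 0 <= s -> 0 <= t -> T t (T s v) = T s (T t v).
Proof. by move=> s0 t0; rewrite -!semigroupD // addrC. Qed.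

Lemma semigroup_bound_iter {d C : R} : 0 < d -> 1 <= C ->
  (forall s v, 0 <= s <= d -> `|T s v| <= C * `|v|) ->
  forall m s v, 0 <= s <= m.+1%:R * d -> `|T s v| <= C ^+ m.+1 * `|v|.
Proof.
move=> d0 C1 hC; elim=> [|m IH] s v /andP[s0 sd].
  by rewrite expr1; apply: hC; rewrite s0 -(mul1r d).
have C0 : 0 <= C := le_trans ler01 C1.
have [sd1|sd1] := leP s d.
  apply: le_trans (hC s v _) _; first by rewrite s0.
  rewrite ler_wpM2r ?normr_ge0 // exprS ler_peMr //.
  by rewrite exprn_ege1.
have sd0 : 0 <= s - d by rewrite subr_ge0 ltW.
rewrite -(subrKC d s) semigroupD ?(ltW d0) //.
apply: le_trans (hC _ _ _) _; first by rewrite ltW //= lexx.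
rewrite exprS -mulrA ler_wpM2l // IH // sd0 /= lerBlDl.
by move: sd; rewrite -[m.+2]addn1 natrD mulrDl mul1r addrC.
Qed.

End semigroup.

Section strongly_continuous_semigroup.
Context {R : realType} {E : completeNormedModType R} {T : R -> E -> E}
  (sg : semigroup T) (sc : strongly_continuous T).

(* Otherwise there are s_n -> 0 and unit vectors v_n with |T s_n v_n| > n; the
   operators T s_n are pointwise bounded by strong continuity, contradicting
   Banach-Steinhaus. *)
Lemma semigroup_unit_bound : exists d C : R, 0 < d /\
  forall s v, 0 <= s <= d -> `|v| <= 1 -> `|T s v| <= C.
Proof.
apply: contrapT => unbounded.
have /choice[sv hsv] : forall n : nat, exists sv : R * E,
    [/\ 0 <= sv.1 <= n.+1%:R^-1, `|sv.2| <= 1 & n%:R < `|T sv.1 sv.2|].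
  move=> n; apply: contrapT => no_witness; apply: unbounded.
  exists n.+1%:R^-1, n%:R; split; first by rewrite invr_gt0.
  move=> s v sd v1; rewrite leNgt; apply/negP => hlt; apply: no_witness.
  by exists (s, v).
pose F : set (E -> E) := [set T (sv n).1 | n in setT].
have FB f : F f -> bounded_fun_norm f /\ linear f.
  move=> [n _ <-]; have [/andP[s0 _] _ _] := hsv n.
  have [BLa [M hM]] := semigroup_linear sg s0.
  split => [r|]; last by move=> a u v; exact: BLa.
  exists (`|M| * `|r|) => x xr; apply: le_trans (hM x) _.
  apply: le_trans (ler_wpM2r (normr_ge0 _) (ler_norm M)) _.
  by apply: ler_wpM2l; rewrite ?normr_ge0 ?(le_trans xr (ler_norm r)).
have pb : pointwise_bounded F.
  move=> x; have [d [d0 hd]] := sc x 1 ltr01.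
  have [N hN] := exists_natSinv_lt d0.
  have [B hB] : exists B, forall n, (n < N)%N -> `|T (sv n).1 x| <= B.
    exists (\sum_(n < N) `|T (sv n).1 x|) => n nN.
    rewrite (bigD1 (Ordinal nN)) //= lerDl.
    by apply: sumr_ge0 => *; exact: normr_ge0.
  exists (Num.max B (`|x| + 1)) => _ [n _ <-].
  have [nN|Nn] := ltnP n N; first by rewrite le_max hB.
  have [/andP[s0 s1] _ _] := hsv n.
  have sd : (sv n).1 < d.
    apply: le_lt_trans s1 (le_lt_trans _ hN).
    by rewrite lef_pV2 ?posrE // ler_nat ltnS.
  rewrite le_max -(subrK x (T _ x)); apply/orP; right.
  by apply: le_trans (ler_normD _ _) _; rewrite addrC lerD2l ltW // hd ?s0.
have [M hM] := Banach_Steinhauss FB pb 1.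
have [n hn] := exists_nat_gt M.
have [_ v1 big] := hsv n.
have Fn : F (T (sv n).1) by exists n.
have := hM _ Fn (sv n).2 v1.
by rewrite leNgt (lt_trans hn big).
Qed.

Lemma semigroup_bound_02 : exists M : R, 1 <= M /\
  forall s v, 0 <= s <= 2 -> `|T s v| <= M * `|v|.
Proof.
have [d [C0 [d0 hC0]]] := semigroup_unit_bound.
pose C := Num.max 1 C0.
have C1 : 1 <= C by rewrite le_max lexx.
have hC s v : 0 <= s <= d -> `|T s v| <= C * `|v|.
  case/andP=> s0 sd; apply: (bounded_linear_unit_ball (semigroup_linear sg s0)).
  by move=> w w1; apply: le_trans (hC0 s w _ w1) _; rewrite ?s0 ?sd // le_max lexx orbT.
have [K hK] := exists_nat_gt (2 / d).
exists (C ^+ K.+1); split; first exact: exprn_ege1.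
move=> s v /andP[s0 s2]; apply: (semigroup_bound_iter sg d0 C1 hC).
rewrite s0 /=; apply: le_trans s2 _; rewrite -ler_pdivrMr //.
by apply: le_trans (ltW hK) _; rewrite ler_nat.
Qed.

End strongly_continuous_semigroup.

(** * Averages along the orbit *)

Section average.
Context {R : realType} {E : normedModType R}.

Definition avg (n : nat) (F : nat -> E) : E := n%:R^-1 *: \sum_(j < n) F j.

Lemma avg_cst n (g : E) : (0 < n)%N -> avg n (fun _ => g) = g.
Proof.
move=> n0; rewrite /avg sumr_const card_ord -[g *+ n]scaler_nat scalerA mulVf ?scale1r //.
by rewrite pnatr_eq0 -lt0n.
Qed.

Lemma avgB n (F G : nat -> E) : avg n F - avg n G = avg n (fun j => F j - G j).
Proof. by rewrite /avg -scalerBr sumrB. Qed.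

Lemma norm_avg_le n (F : nat -> E) (B : R) : (0 < n)%N ->
  (forall j, (j < n)%N -> `|F j| <= B) -> `|avg n F| <= B.
Proof.
move=> n0 hB; have nR : 0 < n%:R :> R by rewrite ltr0n.
rewrite /avg normrZ normfV ger0_norm ?(ltW nR) // mulrC ler_pdivrMr //.
apply: le_trans (ler_norm_sum _ _ _) _.
apply: le_trans (ler_sum _ (fun (j : 'I_n) _ => hB j (ltn_ord j))) _.
by rewrite sumr_const card_ord mulr_natr.
Qed.

Lemma bounded_linear_avg {A : E -> E} : bounded_linear A ->
  forall n F, A (avg n F) = avg n (fun j => A (F j)).
Proof. by move=> BL n F; rewrite /avg (bounded_linearZ BL) (bounded_linear_sum BL). Qed.

Lemma sum_ord_mul a b (F : nat -> E) :
  \sum_(k < a * b) F k = \sum_(j < a) \sum_(l < b) F (j * b + l)%N.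
Proof.
elim: a => [|a IH]; first by rewrite mul0n !big_ord0.
rewrite mulSn addnC big_split_ord /= IH big_ord_recr /=.
by congr (_ + _); apply: eq_bigr => l _; rewrite addnC.
Qed.

Lemma avg_mul a b (F : nat -> E) :
  avg (a * b) F = avg a (fun j => avg b (fun l => F (j * b + l)%N)).
Proof.
rewrite /avg sum_ord_mul natrM invfM -scalerA scaler_sumr.
by congr (_ *: _); rewrite -scaler_sumr.
Qed.

(* both sides are obtained by splitting the sum over [0, n + q) in two ways *)
Lemma sum_shiftB n q (F : nat -> E) :
  \sum_(j < n) F (j + q)%N - \sum_(j < n) F j =
  \sum_(j < q) F (n + j)%N - \sum_(j < q) F j.
Proof.
have split_nq : \sum_(k < n + q) F k = \sum_(j < n) F j + \sum_(j < q) F (n + j)%N.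
  by rewrite big_split_ord.
have split_qn : \sum_(k < q + n) F k = \sum_(j < q) F j + \sum_(j < n) F (j + q)%N.
  rewrite big_split_ord; congr (_ + _); by apply: eq_bigr => j _ /=; rewrite addnC.
rewrite addnC split_qn in split_nq.
move: split_nq; set a := \sum_(j < n) F j; set d := \sum_(j < n) F (j + q)%N.
set b := \sum_(j < q) F (n + j)%N; set c := \sum_(j < q) F j => H.
have -> : d = a + b - c by rewrite -H addrC addKr.
by rewrite [a + b]addrC addrAC addrK.
Qed.

End average.

Section grid.
Context {R : realType}.
Implicit Types (h : R) (j n : nat).

Lemma grid_ge0 j n {h} : 0 <= h -> 0 <= j%:R * (h / n%:R).
Proof. by move=> h0; rewrite mulr_ge0 // divr_ge0. Qed.

Lemma grid_le j n h : (0 < n)%N -> 0 <= h -> (j <= n)%N -> j%:R * (h / n%:R) <= h.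
Proof.
move=> n0 h0 jn; rewrite mulrA ler_pdivrMr ?ltr0n // mulrC.
by apply: ler_wpM2l => //; rewrite ler_nat.
Qed.

Lemma grid_lt j n h : (0 < n)%N -> 0 < h -> (j < n)%N -> j%:R * (h / n%:R) < h.
Proof.
move=> n0 h0 jn; rewrite mulrA ltr_pdivrMr ?ltr0n // mulrC.
by rewrite ltr_pM2l // ltr_nat.
Qed.

End grid.

Definition riemann_sum {R : realType} {E : normedModType R} (T : R -> E -> E)
  (h : R) (g : E) (n : nat) : E :=
  avg n (fun j => T (j%:R * (h / n%:R)) g).

Section riemann_sum.
Context {R : realType} {E : normedModType R} {T : R -> E -> E} (sg : semigroup T)
  {M : R} (M1 : 1 <= M) (hM : forall s v, 0 <= s <= 2 -> `|T s v| <= M * `|v|).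

Let M0 : 0 <= M. Proof. exact: le_trans ler01 M1. Qed.

Let hM1 s v : 0 <= s <= 1 -> `|T s v| <= M * `|v|.
Proof. by case/andP=> s0 s1; apply: hM; rewrite s0 (le_trans s1) ?ler1n. Qed.

Lemma riemann_sum_dist h g n e : (0 < n)%N -> 0 < h ->
  (forall s, 0 <= s < h -> `|T s g - g| <= e) -> `|riemann_sum T h g n - g| <= e.
Proof.
move=> n0 h0 H; rewrite -{2}(avg_cst n g n0) avgB.
apply: norm_avg_le => // j jn; apply: H.
by rewrite grid_ge0 ?ltW // grid_lt.
Qed.

Lemma riemann_sum_orbit_le h g n t : (0 < n)%N -> 0 < h <= 1 -> 0 <= t ->
  `|T t (riemann_sum T h g n) - riemann_sum T h g n| <= M * `|T t g - g|.
Proof.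
move=> n0 /andP[h0 h1] t0.
rewrite /riemann_sum (bounded_linear_avg (semigroup_linear sg t0)) avgB.
apply: norm_avg_le => // j jn.
have s0 := grid_ge0 j n (ltW h0).
rewrite semigroupC // -(bounded_linearB (semigroup_linear sg s0)).
by apply: hM1; rewrite s0 (le_trans (grid_le j n h n0 (ltW h0) (ltnW jn)) h1).
Qed.

Lemma riemann_sum_mul h g n m : (0 < n)%N -> (0 < m)%N -> 0 < h ->
  riemann_sum T h g (n * m) =
  avg n (fun j => T (j%:R * (h / n%:R)) (riemann_sum T (h / n%:R) g m)).
Proof.
move=> n0 m0 h0; rewrite /riemann_sum avg_mul; congr (avg _ _); apply: funext => j.
have s0 := grid_ge0 j n (ltW h0).
rewrite (bounded_linear_avg (semigroup_linear sg s0)); congr (avg _ _); apply: funext => l.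
rewrite -semigroupD ?grid_ge0 ?divr_ge0 ?(ltW h0) //; congr T.
have nR : n%:R != 0 :> R by rewrite pnatr_eq0 -lt0n.
have mR : m%:R != 0 :> R by rewrite pnatr_eq0 -lt0n.
by rewrite natrD !natrM; field; rewrite nR mR.
Qed.

Lemma riemann_sum_refine_le h g n m e : (0 < n)%N -> (0 < m)%N -> 0 < h <= 1 ->
  (forall s, 0 <= s < h / n%:R -> `|T s g - g| <= e) ->
  `|riemann_sum T h g (n * m) - riemann_sum T h g n| <= M * e.
Proof.
move=> n0 m0 /andP[h0 h1] H.
have p0 : 0 < h / n%:R by rewrite divr_gt0 // ltr0n.
rewrite riemann_sum_mul // {2}/riemann_sum avgB.
apply: norm_avg_le => // j jn.
have s0 := grid_ge0 j n (ltW h0).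
rewrite -(bounded_linearB (semigroup_linear sg s0)).
apply: le_trans (hM1 _ _ _) _.
  by rewrite s0 (le_trans (grid_le j n h n0 (ltW h0) (ltnW jn)) h1).
by apply: ler_wpM2l => //; exact: riemann_sum_dist.
Qed.

Lemma riemann_sum_grid_shift h g n q : 0 <= h ->
  T (q%:R * (h / n%:R)) (riemann_sum T h g n) - riemann_sum T h g n =
  n%:R^-1 *: \sum_(j < q) (T ((n + j)%N%:R * (h / n%:R)) g - T (j%:R * (h / n%:R)) g).
Proof.
move=> h0; set p := h / n%:R; have p0 : 0 <= p by rewrite divr_ge0.
have qp0 : 0 <= q%:R * p by rewrite mulr_ge0.
rewrite /riemann_sum -/p (bounded_linear_avg (semigroup_linear sg qp0)).
rewrite (_ : avg n _ = avg n (fun j => T ((j + q)%N%:R * p) g)).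
  by rewrite avgB /avg !sumrB (sum_shiftB n q (fun k => T (k%:R * p) g)).
congr (avg _ _); apply: funext => j; rewrite -semigroupD ?mulr_ge0 //.
by rewrite natrD mulrDl addrC.
Qed.

Lemma riemann_sum_grid_shift_le h g n q : (0 < n)%N -> 0 < h <= 1 ->
  q%:R * (h / n%:R) <= h ->
  `|T (q%:R * (h / n%:R)) (riemann_sum T h g n) - riemann_sum T h g n|
    <= 2 * M * `|g| * (q%:R * (h / n%:R) / h).
Proof.
move=> n0 /andP[h0 h1] qh; set p := h / n%:R.
have nR : 0 < n%:R :> R by rewrite ltr0n.
have p0 : 0 < p by rewrite divr_gt0.
have np : n%:R * p = h by rewrite /p mulrC divfK // gt_eqF.
rewrite riemann_sum_grid_shift ?(ltW h0) // -/p normrZ normfV ger0_norm ?(ltW nR) //.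
have step (j : 'I_q) :
    `|T ((n + j)%N%:R * p) g - T (j%:R * p) g| <= 2 * M * `|g|.
  have jp : 0 <= j%:R * p <= h.
    rewrite mulr_ge0 ?(ltW p0) //= (le_trans _ qh) // ler_wpM2r ?(ltW p0) //.
    by rewrite ler_nat ltnW.
  have njp : 0 <= (n + j)%N%:R * p <= 2.
    rewrite natrD mulrDl np; case/andP: jp => j0 jh.
    by apply/andP; split; lra.
  apply: le_trans (ler_normB _ _) _; rewrite -mulrA mulr2n mulrDl mul1r.
  by apply: lerD; [apply: hM | apply: hM1; case/andP: jp => j0 jh; lra].
have ni : 0 <= n%:R^-1 :> R by rewrite invr_ge0 ltW.
apply: le_trans (ler_wpM2l ni (ler_norm_sum _ _ _)) _.
apply: le_trans (ler_wpM2l ni (ler_sum _ (fun j _ => step j))) _.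
rewrite sumr_const card_ord -[_ *+ q]mulr_natr le_eqVlt; apply/orP; left.
by apply/eqP; rewrite /p; field; rewrite !lt0r_neq0.
Qed.

Lemma riemann_sum_lipschitz h g n t e : (0 < n)%N -> 0 < h <= 1 -> 0 <= t <= h ->
  (forall s, 0 <= s < h / n%:R -> `|T s g - g| <= e) ->
  `|T t (riemann_sum T h g n) - riemann_sum T h g n|
    <= M * (2 * M * `|g| * (t / h)) + M * e.
Proof.
move=> n0 hh /andP[t0 th] H; have /andP[h0 h1] := hh.
set p := h / n%:R; have p0 : 0 < p by rewrite divr_gt0 // ltr0n.
set q := Num.trunc (t / p).
have /andP[qlo qhi] := truncn_itv (divr_ge0 t0 (ltW p0)).
have qpt : q%:R * p <= t by rewrite -ler_pdivlMr.
have tqp : t < q%:R * p + p.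
  by move: qhi; rewrite ltr_pdivrMr // -addn1 natrD mulrDl mul1r.
set r := t - q%:R * p.
have r0 : 0 <= r by rewrite subr_ge0.
have rp : r < p by rewrite /r; lra.
have ph : p <= h by rewrite /p ler_pdivrMr ?ltr0n // ler_peMr ?(ltW h0) // ler1n.
have qp0 : 0 <= q%:R * p by rewrite mulr_ge0 // ltW.
set y := riemann_sum T h g n.
have -> : T t y - y = T r (T (q%:R * p) y - y) + (T r y - y).
  rewrite (bounded_linearB (semigroup_linear sg r0)) addrA subrK.
  by rewrite -semigroupD // /r subrK.
apply: le_trans (ler_normD _ _) _; apply: lerD.
  apply: le_trans (hM1 _ _ _) _; first by rewrite r0 /=; lra.
  apply: ler_wpM2l => //; apply: le_trans (riemann_sum_grid_shift_le h g n q n0 hh _) _.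
    exact: le_trans qpt th.
  apply: ler_wpM2l; first by rewrite !mulr_ge0 ?normr_ge0.
  by rewrite ler_pM2r ?invr_gt0.
apply: le_trans (riemann_sum_orbit_le h g n r n0 hh r0) _.
by apply: ler_wpM2l => //; apply: H; rewrite r0 /=; exact: rp.
Qed.

End riemann_sum.

Section lipschitz_limit.
Context {R : realType} {E : normedModType R}.

Lemma norm_le_lim_lipschitz (phi : E -> E) {K B : R} {u : nat -> E} {y : E} :
  0 < K -> (forall v w, `|phi v - phi w| <= K * `|v - w|) -> u @ \oo --> y ->
  (forall eps, 0 < eps -> \forall N \near \oo, `|phi (u N)| <= B + eps) ->
  `|phi y| <= B.
Proof.
move=> K0 Lphi uy hB; apply/ler_addgt0Pr => eps eps0.
have e2 : 0 < eps / 2 by rewrite divr_gt0.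
have e2K : 0 < eps / 2 / K by rewrite divr_gt0.
move/cvgrPdist_lt: uy => /(_ _ e2K) uy.
have [N [yuN hN]] := filter_ex (filterI uy (hB _ e2)).
have KyuN : K * `|y - u N| < eps / 2.
  by rewrite -ltr_pdivlMl // mulrC.
rewrite -(subrK (phi (u N)) (phi y)); apply: le_trans (ler_normD _ _) _.
by have := Lphi y (u N); lra.
Qed.

End lipschitz_limit.

Section smoothing.
Context {R : realType} {E : completeNormedModType R} {T : R -> E -> E}
  (sg : semigroup T) (sc : strongly_continuous T)
  {M : R} (M1 : 1 <= M) (hM : forall s v, 0 <= s <= 2 -> `|T s v| <= M * `|v|).

Let M0 : 0 < M. Proof. exact: lt_le_trans ltr01 M1. Qed.

Let pow2_gt0 N : (0 < 2 ^ N)%N. Proof. by rewrite expn_gt0. Qed.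

Lemma dyadic_modulus h g eps : 0 < h -> 0 < eps ->
  \forall N \near \oo, forall s, 0 <= s < h / (2 ^ N)%:R -> `|T s g - g| <= eps.
Proof.
move=> h0 eps0; have [d [d0 hd]] := sc g eps eps0.
have dh : 0 < d / h by rewrite divr_gt0.
apply: filterS (near_infty_natSinv_expn_lt (PosNum dh)) => N /= hN s /andP[s0 sh].
apply/ltW/hd; rewrite s0 (lt_trans sh) //.
have -> : h / (2 ^ N)%:R = h * (1 / 2 ^+ N) by rewrite natrX mul1r.
by rewrite -[d](divfK (lt0r_neq0 h0)) [_ * h]mulrC ltr_pM2l.
Qed.

Lemma orbit_step_lipschitz t v w : 0 <= t <= 2 ->
  `|(T t v - v) - (T t w - w)| <= (M + 1) * `|v - w|.
Proof.
move=> t02; have /andP[t0 _] := t02; have BL := semigroup_linear sg t0.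
have -> : (T t v - v) - (T t w - w) = T t (v - w) - (v - w).
  rewrite (bounded_linearB BL) opprB addrACA [in RHS]opprB [in RHS]addrACA.
  by rewrite [- T t w - v]addrC.
apply: le_trans (ler_normB _ _) _; rewrite mulrDl mul1r lerD2r.
exact: hM t02.
Qed.

Lemma dyadic_riemann_sum_cvg h g : 0 < h <= 1 ->
  cvg ((fun N => riemann_sum T h g (2 ^ N)) @ \oo).
Proof.
move=> hh; have /andP[h0 _] := hh.
apply: cauchy_cvg; apply: cauchy_exP => eps eps0.
have e2M : 0 < eps / (2 * M) by rewrite divr_gt0 ?mulr_gt0.
have [N1 _ hN1] := dyadic_modulus h g _ h0 e2M.
exists (riemann_sum T h g (2 ^ N1)), N1 => // N /= N1N.
rewrite -ball_normE /ball_ /= distrC -(subnKC N1N) expnD.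
have /= modN1 := hN1 N1 (leqnn N1).
apply: le_lt_trans (riemann_sum_refine_le sg M1 hM _ _ _ _ _
  (pow2_gt0 _) (pow2_gt0 _) hh modN1) _.
have -> : M * (eps / (2 * M)) = eps / 2 by field; rewrite lt0r_neq0.
lra.
Qed.

(* [y] is the average [h^-1 \int_0^h T s g ds], the limit of its dyadic Riemann sums *)
Lemma smoothing_exists h g : 0 < h <= 1 -> exists y : E,
  [/\ forall e, (forall s, 0 <= s < h -> `|T s g - g| <= e) -> `|y - g| <= e,
      forall t, 0 <= t <= h -> `|T t y - y| <= M * (2 * M * `|g| * (t / h))
    & forall t, 0 <= t <= 2 -> `|T t y - y| <= M * `|T t g - g|].
Proof.
move=> hh; have /andP[h0 h1] := hh.
have M1_gt0 : 0 < M + 1 by apply: addr_gt0.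
have /cvg_ex[y uy] := dyadic_riemann_sum_cvg h g hh.
exists y; split.
- move=> e He; apply: (norm_le_lim_lipschitz (fun v => v - g) ltr01 _ uy).
    by move=> v w; rewrite opprB addrA subrK mul1r.
  move=> eps eps0; apply: nearW => N.
  apply: le_trans (riemann_sum_dist h g _ e (pow2_gt0 N) h0 He) _.
  by rewrite lerDl ltW.
- move=> t /andP[t0 th].
  have t2 : 0 <= t <= 2 by rewrite t0 /=; lra.
  apply: (norm_le_lim_lipschitz (fun v => T t v - v) M1_gt0
    (fun v w => orbit_step_lipschitz t v w t2) uy).
  move=> eps eps0; have eM : 0 < eps / M by rewrite divr_gt0.
  apply: filterS (dyadic_modulus h g _ h0 eM) => N hN.
  apply: le_trans (riemann_sum_lipschitz sg M1 hM h g _ t _ (pow2_gt0 N) hh _ hN) _.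
    by rewrite t0 th.
  by rewrite [M * (eps / M)]mulrCA mulfV ?lt0r_neq0 ?mulr1.
- move=> t t2; have /andP[t0 _] := t2.
  apply: (norm_le_lim_lipschitz (fun v => T t v - v) M1_gt0
    (fun v w => orbit_step_lipschitz t v w t2) uy).
  move=> eps eps0; apply: nearW => N.
  apply: le_trans (riemann_sum_orbit_le sg hM h g _ t (pow2_gt0 N) hh t0) _.
  by rewrite lerDl ltW.
Qed.

End smoothing.

(** * The bounded ultrapower *)

Definition zero_on {I : Type} {E : nmodType} (J : set I) (x : I -> E) : I -> E :=
  fun i => if pselect (J i) then 0 else x i.

Lemma zero_on_in {I : Type} {E : nmodType} (J : set I) (x : I -> E) i :
  J i -> zero_on J x i = 0.
Proof. by rewrite /zero_on; case: pselect. Qed.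

Lemma zero_on_notin {I : Type} {E : nmodType} (J : set I) (x : I -> E) i :
  ~ J i -> zero_on J x i = x i.
Proof. by rewrite /zero_on; case: pselect. Qed.

Section bounded_ultrapower.
Context {R : realType} {E : normedModType R} {I : Type} {U : set (set I)}
  (HU : ultrafilter_on U).
Implicit Types (x y f g : I -> E).

Lemma ns_approx_refl x : ns_approx U x x.
Proof. by move=> n; apply: (ultra_all HU) => i /=; rewrite subrr !normr0 invr_gt0. Qed.

Lemma ns_approx_eqr {x f g} : U [set i | f i = g i] -> ns_approx U x f -> ns_approx U x g.
Proof.
move=> Ufg xf n; apply: (ultraS HU _ (ultraI HU Ufg (xf n))) => i [/= fg].
by rewrite -fg.
Qed.

Lemma bounded_ns_fin x : bounded_family x -> ns_fin U x.
Proof.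
move=> [M hM]; have [n hn] := exists_nat_gt M; exists n.
by apply: (ultra_all HU) => i /=; rewrite normr_id (le_lt_trans (hM i)).
Qed.

Lemma ns_fin_bounded_eq {f} : ns_fin U f ->
  exists g, bounded_family g /\ U [set i | g i = f i].
Proof.
move=> [n Un]; exists (zero_on [set i | ~ `|f i| < n%:R] f); split.
  exists n%:R => i; have [fi|nfi] := pselect (`|f i| < n%:R).
    by rewrite zero_on_notin ?ltW // => /(_ fi).
  by rewrite zero_on_in // normr0.
apply: (ultraS HU _ Un) => i /=; rewrite normr_id => fi.
by rewrite zero_on_notin // => /(_ fi).
Qed.

Lemma cU_ns_approx x y : bounded_family x -> bounded_family y ->
  cU U (fun i => x i - y i) <-> ns_approx U x y.
Proof.
move=> bx b_y; split => [[_ cxy] n|xy].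
  have [J [UJ hJ]] := cxy n.+1%:R^-1 (ltac:(by rewrite invr_gt0)).
  by apply: (ultraS HU _ UJ) => i /hJ /=; rewrite normr_id.
split=> [|e e0]; first exact: bounded_familyB.
have [n hn] := exists_natSinv_lt e0.
exists [set i | `|x i - y i| < n.+1%:R^-1]; split; last first.
  by move=> i /= hi; exact: lt_trans hi hn.
by apply: (ultraS HU _ (xy n)) => i /=; rewrite normr_id.
Qed.

Lemma zero_on_bounded J x : bounded_family x -> bounded_family (zero_on J x).
Proof.
move=> [M hM]; exists M => i; have [Ji|nJi] := pselect (J i).
  by rewrite zero_on_in // normr0 (le_trans (normr_ge0 _) (hM i)).
by rewrite zero_on_notin.
Qed.

Lemma zero_on_cU J x : bounded_family x -> U J -> cU U (zero_on J x).
Proof.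
move=> bx UJ; split=> [|e e0]; first exact: zero_on_bounded.
by exists J; split => // i Ji; rewrite zero_on_in // normr0.
Qed.

Lemma zero_on_mT (T : R -> E -> E) J x : semigroup T -> mT T x -> mT T (zero_on J x).
Proof.
move=> sg [bx hx]; split=> [|e e0]; first exact: zero_on_bounded.
have [d [d0 hd]] := hx e e0; exists d; split => // t /andP[t0 td].
have BL := semigroup_linear sg (ltW t0).
have bTx := bounded_family_orbit_step BL bx.
apply: le_lt_trans (hd t _); last by rewrite t0 td.
apply: (linf_norm_le _ _ (ultra_inhabited HU)) => i.
have [Ji|nJi] := pselect (J i); last by rewrite zero_on_notin //; exact: (norm_le_linf _ i bTx).
rewrite zero_on_in // bounded_linear0 // subrr normr0.
exact: linf_norm_ge0 (ultra_inhabited HU) bTx.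
Qed.

Section standard_part_of_norm.
Variables (S : set (I -> E)) (x : I -> E).
Hypotheses (bx : bounded_family x) (S_cU : forall c, S c -> cU U c)
  (S_zero_on : forall J, U J -> S (zero_on J x)).

Let dists := [set linf_norm (fun i => x i - c i) | c in S].

Let dists_lbound : has_lbound dists.
Proof.
exists 0 => _ [c Sc <-].
exact: linf_norm_ge0 (ultra_inhabited HU) (bounded_familyB bx (S_cU _ Sc).1).
Qed.

Let dists_nonempty : nonempty dists.
Proof. by eexists; exists (zero_on setT x); first exact: S_zero_on _ (ultraT HU). Qed.

Lemma ultra_quot_norm_lt {e : R} : 0 < e -> U [set i | quot_norm S x - e < `|x i|].
Proof.
move=> e0; apply: contrapT => /(ultraC HU) UJ.
have := ge_inf dists_lbound (ex_intro2 _ _ _ (S_zero_on _ UJ) erefl).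
apply/negP; rewrite -ltNge -/(quot_norm S x).
apply: (le_lt_trans (y := quot_norm S x - e)); last by rewrite ltrBlDr ltrDl.
apply: (linf_norm_le _ _ (ultra_inhabited HU)) => i.
have [Ji|nJi] := pselect ((~` [set i | quot_norm S x - e < `|x i|]) i).
  by rewrite zero_on_in // subr0 leNgt; apply/negP.
rewrite zero_on_notin // subrr normr0; have [j /= /negP] := ultra_nonempty HU UJ.
by rewrite -leNgt; apply: le_trans.
Qed.

Lemma ultra_lt_quot_norm {e : R} : 0 < e -> U [set i | `|x i| < quot_norm S x + e].
Proof.
move=> e0; apply: contrapT => /(ultraC HU) UJ.
suff : quot_norm S x + e / 2 <= quot_norm S x by rewrite gerDl leNgt divr_gt0.
apply: lb_le_inf dists_nonempty _ => _ [c Sc <-].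
have [J' [UJ' hJ']] := (S_cU _ Sc).2 (e / 2) (divr_gt0 e0 (ltr0Sn _ 1)).
have [i [/= /negP Ji J'i]] := ultra_nonempty HU (ultraI HU UJ UJ').
rewrite -leNgt in Ji; have ci := hJ' i J'i.
apply: le_trans (norm_le_linf _ i (bounded_familyB bx (S_cU _ Sc).1)).
by apply: le_trans (lerB_dist _ _); lra.
Qed.

Lemma is_st_quot_norm : is_st U (fun i => `|x i|) (quot_norm S x).
Proof.
move=> n; have e0 : 0 < n.+1%:R^-1 :> R by rewrite invr_gt0.
apply: (ultraS HU _ (ultraI HU (ultra_quot_norm_lt e0) (ultra_lt_quot_norm e0))).
by move=> i [/= lo hi]; rewrite ltr_distl lo hi.
Qed.

End standard_part_of_norm.

End bounded_ultrapower.

(** * Representing hat E_T by m^T *)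

Section E_T_basics.
Context {R : realType} {E : normedModType R} {I : Type} {U : set (set I)}
  (HU : ultrafilter_on U) {T : R -> E -> E}.

Lemma E_T_eq {f g} : U [set i | f i = g i] -> E_T U T f -> E_T U T g.
Proof.
move=> Ufg [[n Un] hf]; split=> [|e e0].
  by exists n; apply: (ultraS HU _ (ultraI HU Ufg Un)) => i [/= <-].
have [d [d0 hd]] := hf e e0; exists d; split=> // t Ut.
by apply: (ultraS HU _ (ultraI HU Ufg (hd t Ut))) => i [/= <-].
Qed.

Lemma mT_E_T x : semigroup T -> mT T x -> E_T U T x.
Proof.
move=> sg [bx hx]; split=> [|e e0]; first exact: bounded_ns_fin.
have [d [d0 hd]] := hx e e0; exists d; split=> // t Ut.
apply: (ultraS HU _ Ut) => i /= ti; have /andP[t0 _] := ti.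
have bTx := bounded_family_orbit_step (semigroup_linear sg (ltW t0)) bx.
exact: le_lt_trans (norm_le_linf _ i bTx) (hd _ ti).
Qed.

(* otherwise, picking a bad time for each bad index gives a time in [(0, d)]
   violating [E_T] *)
Lemma E_T_uniform f e : E_T U T f -> 0 < e -> exists d, 0 < d /\
  U [set i | forall s, 0 < s < d -> `|T s (f i) - f i| < e].
Proof.
move=> [_ hf] e0; have [d [d0 hd]] := hf e e0; exists d; split=> //.
apply: contrapT => /(ultraC HU) Ubad.
have /choice[t ht] i : exists t, 0 < t < d /\
    (~ (forall s, 0 < s < d -> `|T s (f i) - f i| < e) -> e <= `|T t (f i) - f i|).
  have [good|/existsNP[s /not_implyP[sd bad]]] :=
    pselect (forall s, 0 < s < d -> `|T s (f i) - f i| < e).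
    by exists (d / 2); split=> //; apply/andP; split; lra.
  by exists s; split=> // _; rewrite leNgt; apply/negP.
have Ut := hd t (ultra_all HU (fun i => (ht i).1)).
have [i [/= lt bad]] := ultra_nonempty HU (ultraI HU Ut Ubad).
by have := (ht i).2 bad; rewrite leNgt lt.
Qed.

End E_T_basics.

Section countably_incomplete.
Context {I : Type} {U : set (set I)} (HU : ultrafilter_on U).

(* [depth i] is the largest [k] such that [i] lies in [B m] and [J m] for all
   [m < k], where the [J n] witness countable incompleteness; it is finite as
   only indices outside the intersection of the [J n] are considered *)
Lemma countably_incomplete_depth (B : nat -> set I) :
  countably_incomplete U -> (forall k, U (B k)) -> exists depth : I -> nat,
  (forall k, U [set i | (k <= depth i)%N]) /\ (forall i k, (k < depth i)%N -> B k i).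
Proof.
move=> [J [UJ nUJ]] UB.
pose C k := [set i | ~ (forall n, J n i) /\ forall m, (m < k)%N -> B m i /\ J m i].
have UC k : U (C k).
  elim: k => [|k IH].
    by apply: (ultraS HU _ (ultraC HU nUJ)) => i nJ; split.
  apply: (ultraS HU _ (ultraI HU IH (ultraI HU (UB k) (UJ k)))).
  move=> i [[nJ Ci] BJi]; split=> // m; rewrite ltnS leq_eqVlt.
  by case/orP=> [/eqP -> //|]; exact: Ci.
have Cmono k m : (k <= m)%N -> C m `<=` C k.
  by move=> km i [nJ Ci]; split=> // m' m'k; apply: Ci; exact: leq_trans m'k km.
have /choice[depth hdepth] i : exists d, (d = 0%N \/ C d i) /\ ~ C d.+1 i.
  apply: contrapT => H; have allC k : C k.+1 i.
    elim: k => [|k IH]; apply: contrapT => nC; apply: H.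
      by exists 0%N; split; [left|].
    by exists k.+1; split; [right|].
  by have [nJ _] := allC 0%N; apply: nJ => n; have [_ /(_ n (ltnSn n))[]] := allC n.
exists depth; split=> [k|i k kd].
  apply: (ultraS HU _ (UC k)) => i Cki /=; rewrite leqNgt; apply/negP => dk.
  exact: (hdepth i).2 (Cmono _ _ dk i Cki).
have [[d0|Cd] _] := hdepth i; first by rewrite d0 in kd.
by have [_ /(_ k kd)[]] := Cd.
Qed.

End countably_incomplete.

Fixpoint window {R : realType} (d : nat -> R) (k : nat) : R :=
  if k is k'.+1 then Num.min (window d k') (d k') else 1.

Section window.
Context {R : realType} (d : nat -> R).

Lemma window_le1 k : window d k <= 1.
Proof. by elim: k => //= k IH; rewrite ge_min IH. Qed.

Lemma window_gt0 k : (forall m, 0 < d m) -> 0 < window d k.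
Proof. by move=> d0; elim: k => //= k IH; rewrite lt_min IH d0. Qed.

Lemma window_le k m : (m < k)%N -> window d k <= d m.
Proof.
elim: k => // k IH; rewrite ltnS leq_eqVlt => /orP[/eqP ->|mk] /=.
  by rewrite ge_min lexx orbT.
by rewrite ge_min IH.
Qed.

Lemma window_decr k l : (k <= l)%N -> window d l <= window d k.
Proof.
move=> kl; rewrite -(subnKC kl); elim: (l - k)%N => [|n IH]; first by rewrite addn0.
by rewrite addnS /= ge_min IH.
Qed.

End window.

Section smoothed_family.
Context {R : realType} {E : normedModType R} {I : Type} {U : set (set I)}
  {T : R -> E -> E} (HU : ultrafilter_on U) (sg : semigroup T)
  {M : R} (M1 : 1 <= M) (hM : forall s v, 0 <= s <= 2 -> `|T s v| <= M * `|v|)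
  {f : I -> E} {b : R} {d : nat -> R} {depth : I -> nat} {y : I -> E}
  (f_le : forall i, `|f i| <= b) (d_gt0 : forall k, 0 < d k)
  (depth_large : forall k, U [set i | (k <= depth i)%N])
  (f_modulus : forall i k, (k < depth i)%N ->
     forall s, 0 < s < d k -> `|T s (f i) - f i| < k.+1%:R^-1)
  (y_near : forall i e, (forall s, 0 <= s < window d (depth i) ->
     `|T s (f i) - f i| <= e) -> `|y i - f i| <= e)
  (y_lipschitz : forall i t, 0 <= t <= window d (depth i) ->
     `|T t (y i) - y i| <= M * (2 * M * `|f i| * (t / window d (depth i))))
  (y_orbit : forall i t, 0 <= t <= 2 ->
     `|T t (y i) - y i| <= M * `|T t (f i) - f i|).

Let M0 : 0 < M. Proof. exact: lt_le_trans ltr01 M1. Qed.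

Let window_le2 k t : 0 <= t <= window d k -> 0 <= t <= 2.
Proof.
by case/andP=> t0 tw; rewrite t0 (le_trans tw) // (le_trans (window_le1 _ _)) ?ler1n.
Qed.

Lemma smoothed_bounded : bounded_family y.
Proof.
exists ((M + 2) * b) => i.
have step s : 0 <= s < window d (depth i) -> `|T s (f i) - f i| <= (M + 1) * `|f i|.
  move=> /andP[s0 sw]; apply: le_trans (ler_normB _ _) _.
  rewrite mulrDl mul1r lerD2r; apply: hM; apply: (window_le2 (depth i)).
  by rewrite s0 ltW.
have := y_near i _ step; have := ler_normD (y i - f i) (f i); rewrite subrK.
have : (M + 2) * `|f i| <= (M + 2) * b by rewrite ler_wpM2l ?f_le // addr_ge0 ?(ltW M0).
by rewrite !mulrDl !mul1r; lra.
Qed.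

Lemma smoothed_approx : ns_approx U y f.
Proof.
move=> n; apply: (ultraS HU _ (depth_large n.+2)) => i /= ni; rewrite normr_id.
have near_n2 s : 0 <= s < window d (depth i) -> `|T s (f i) - f i| <= n.+2%:R^-1.
  case/andP=> s0 sw; have [->|sn0] := eqVneq s 0.
    by rewrite semigroup0 // subrr normr0 invr_ge0 ler0n.
  apply/ltW/f_modulus => //; rewrite lt_neqAle eq_sym sn0 s0 /=.
  exact: lt_le_trans sw (window_le d _ _ ni).
apply: le_lt_trans (y_near i _ near_n2) _.
by rewrite ltf_pV2 ?posrE ?ltr0n // ltr_nat.
Qed.

Lemma smoothed_orbit_deep i j t : (j < depth i)%N -> 0 < t < window d j.+1 ->
  `|T t (y i) - y i| <= M * j.+1%:R^-1.
Proof.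
move=> jd /andP[t0 tw].
apply: le_trans (y_orbit i t _) _; first by apply: (window_le2 j.+1); rewrite !ltW.
apply: ler_wpM2l; first exact: ltW.
apply/ltW/f_modulus => //.
by rewrite t0 (lt_le_trans tw) // window_le.
Qed.

Lemma smoothed_orbit_shallow i j t : (depth i <= j.+1)%N -> 0 <= t <= window d j.+1 ->
  `|T t (y i) - y i| <= 2 * M * M * b * (t / window d j.+1).
Proof.
move=> dj /andP[t0 tw].
have w0 : 0 < window d j.+1 by exact: window_gt0.
have wdi : window d j.+1 <= window d (depth i) by exact: window_decr.
have wi0 : 0 < window d (depth i) := lt_le_trans w0 wdi.
apply: le_trans (y_lipschitz i t _) _; first by rewrite t0 (le_trans tw).
have -> : M * (2 * M * `|f i| * (t / window d (depth i))) =
  2 * M * M * (`|f i| * (t / window d (depth i))) by ring.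
rewrite -[2 * M * M * b * _]mulrA ler_wpM2l ?mulr_ge0 ?(ltW M0) //.
apply: ler_pM; rewrite ?normr_ge0 ?divr_ge0 ?(ltW wi0) ?f_le //.
by rewrite ler_wpM2l // lef_pV2.
Qed.

Lemma smoothed_mT : mT T y.
Proof.
split=> [|eps eps0]; first exact: smoothed_bounded.
have [j hj] := exists_natSinv_lt (divr_gt0 eps0 (mulr_gt0 (ltr0Sn _ 1) M0)).
have [i0] := ultra_inhabited HU; have b0 : 0 <= b := le_trans (normr_ge0 _) (f_le i0).
set w := window d j.+1; have w0 : 0 < w by exact: window_gt0.
set c := 2 * M * M * b; have c0 : 0 <= c by rewrite !mulr_ge0 ?(ltW M0).
exists (Num.min w (w * eps / (2 * (c + 1)))); split.
  by rewrite lt_min w0 !divr_gt0 ?mulr_gt0 //; lra.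
move=> t /andP[t0]; rewrite lt_min => /andP[tw tc].
apply: le_lt_trans (linf_norm_le _ (eps / 2) (ultra_inhabited HU) _) _; last lra.
move=> i; have [jd|dj] := ltnP j (depth i).
  apply: le_trans (smoothed_orbit_deep i j t jd _) _; first by rewrite t0.
  have -> : eps / 2 = M * (eps / (2 * M)) by field; rewrite lt0r_neq0.
  by rewrite ler_wpM2l ?(ltW M0) ?ltW.
apply: le_trans (smoothed_orbit_shallow i j t (leqW dj) _) _; first by rewrite (ltW t0) ltW.
have tw' : t / w <= eps / (2 * (c + 1)) by rewrite ler_pdivrMr // mulrC mulrA ltW.
apply: le_trans (ler_wpM2l c0 tw') _.
have c1 : 0 < c + 1 := ltr_wpDl c0 ltr01.
rewrite (_ : c * _ = eps / 2 * (c / (c + 1))); last by field; rewrite lt0r_neq0.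
by rewrite ger_pMr ?divr_gt0 // ler_pdivrMr // mul1r lerDl.
Qed.

End smoothed_family.

Section E_T_representatives.
Context {R : realType} {E : completeNormedModType R} {I : Type} {U : set (set I)}
  {T : R -> E -> E} (HU : ultrafilter_on U) (ci : countably_incomplete U)
  (sg : semigroup T) (sc : strongly_continuous T).

Lemma E_T_bounded_mT f : bounded_family f -> E_T U T f ->
  exists x, mT T x /\ ns_approx U x f.
Proof.
move=> [b f_le] Ef.
have [M [M1 hM]] := semigroup_bound_02 sg sc.
have /choice[d hd] k := E_T_uniform HU f k.+1%:R^-1 Ef (ltac:(by rewrite invr_gt0)).
have [depth [depth_large f_modulus]] := countably_incomplete_depth HU _ ci (fun k => (hd k).2).
have window_itv i : 0 < window d (depth i) <= 1.
  by rewrite window_gt0 ?window_le1 // => k; case: (hd k).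
have /choice[y hy] i := smoothing_exists sg sc M1 hM _ (f i) (window_itv i).
exists y; split.
  by apply: (smoothed_mT HU M1 hM f_le (fun k => (hd k).1) f_modulus) => i; case: (hy i).
by apply: (smoothed_approx HU sg depth_large f_modulus) => i; case: (hy i).
Qed.

Lemma E_T_mT f : E_T U T f -> exists x, mT T x /\ ns_approx U x f.
Proof.
move=> Ef; have [g [bg Ugf]] := ns_fin_bounded_eq HU Ef.1.
have Eg : E_T U T g.
  by apply: (E_T_eq HU _ Ef); apply: (ultraS HU _ Ugf) => i /= ->.
have [x [mx xg]] := E_T_bounded_mT _ bg Eg.
by exists x; split; last exact: (ns_approx_eqr HU Ugf xg).
Qed.

End E_T_representatives.

Theorem mainTheorem1 (R : realType) (E : completeNormedModType R)
  (T : R -> E -> E) (I : Type) (U : set (set I)) :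
  semigroup T -> strongly_continuous T ->
  ultrafilter_on U -> countably_incomplete U ->
  (* Phi : l^oo/c_U -> hat E is well defined and injective *)
  (forall x y : I -> E, bounded_family x -> bounded_family y ->
     (cU U (fun i => x i - y i) <-> ns_approx U (Phi x) (Phi y))) /\
  (* Phi lands in hat E *)
  (forall x : I -> E, bounded_family x -> ns_fin U (Phi x)) /\
  (* Phi is onto *)
  (forall f : I -> E, ns_fin U f ->
     exists x, bounded_family x /\ ns_approx U (Phi x) f) /\
  (* Phi is isometric: ||Phi(x + c_U)|| = st(||x||) = ||x + c_U|| *)
  (forall x : I -> E, bounded_family x ->
     is_st U (fun i => `|Phi x i|) (quot_norm (cU U) x)) /\
  (* Phi (iota (m^T / (c_U cap m^T))) = hat E_T *)
  (forall x : I -> E, mT T x ->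
     exists f, E_T U T f /\ ns_approx U (Phi x) f) /\
  (forall f : I -> E, E_T U T f ->
     exists x, mT T x /\ ns_approx U (Phi x) f) /\
  (* Phi o iota is isometric for the quotient norm of m^T/(c_U cap m^T) *)
  (forall x : I -> E, mT T x ->
     is_st U (fun i => `|Phi x i|) (quot_norm (cU U `&` mT T) x)).
Proof.
move=> sg sc HU ci; rewrite /Phi.
split; first exact: cU_ns_approx HU.
split; first exact: bounded_ns_fin HU.
split.
  move=> f /(ns_fin_bounded_eq HU)[x [bx Uxf]].
  by exists x; split; last exact: (ns_approx_eqr HU Uxf (ns_approx_refl HU x)).
split.
  move=> x bx; apply: (is_st_quot_norm HU _ x bx) => // J UJ.
  exact: zero_on_cU.
split; first by move=> x mx; exists x; split; [exact: mT_E_T | exact: ns_approx_refl].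
split; first exact: E_T_mT.
move=> x mx; apply: (is_st_quot_norm HU _ x mx.1) => [c [] //|J UJ].
by split; [exact: (zero_on_cU _ _ mx.1 UJ) | exact: (zero_on_mT HU _ _ _ sg mx)].
Qed.
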